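(* Let $S$ be a factor set with slot set $\Omega$ and symmetry group $\mathcal{G}(S)$, let $\rho$ be the group of relabelings of internal index symbols, and let $\pi,\pi_1,\pi_2$ be colorings of $\Omega$ encoding tensor products with factor set $S$. Then $\pi_1$ and $\pi_2$ are $(\mathcal{G}(S),\rho)$-equivalent (i.e. the two tensor products are equivalent) if and only if $G^E(\pi_1)\cong G^E(\pi_2)$ under $\mathcal{G}(S)$. Moreover, $\operatorname{Aut}_{\mathcal{G}(S)}(G(\pi))=\mathcal{G}_{\varpi(\pi)}(S)$ and $\operatorname{Aut}_{\mathcal{G}(S)}(G^E(\pi))=\operatorname{Ker}\phi$, the pointwise stabilizer of $\Omega_E(\pi)$ in $\mathcal{G}_{\varpi(\pi)}(S)$.
   Context: A $d$-way tensor $\mathbf{X}$ has permutation symmetry group $\mathcal{G}(\mathbf{X})\le\mathcal{S}_d$ of all $g$ with $X^{p_{g(1)}\cdots p_{g(d)}}=X^{p_1\cdots p_d}$. A factor set $S=(\mathbf{X}_1,\dots,\mathbf{X}_k)$ has slots $\Omega=\{1,\dots,D\}$, $D=\sum d_i$; $\mathcal{G}(S)\le\mathcal{S}_D$ is the direct product of the $\mathcal{G}(\mathbf{X}_i)$ acting on their slot blocks, with each run of $n$ identical factors $\mathbf{X}$ contributing $(\mathcal{G}(\mathbf{X})^n)\rtimes\mathcal{S}_n$. A tensor product is encoded by a coloring $\pi:\Omega\to\{\text{index symbols}\}$, each external symbol used once, each internal symbol exactly twice, each symbol having a type (e.g. occupied, virtual); $\Omega_E(\pi),\Omega_I(\pi)$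 are the slots with external/internal symbols. $\rho$ is the group of permutations of index symbols fixing external symbols and permuting internal ones within each type; $\pi_1,\pi_2$ are $(\mathcal{G}(S),\rho)$-equivalent if $\pi_1\circ g=h\circ\pi_2$ for some $g\in\mathcal{G}(S)$, $h\in\rho$. Contraction pattern: $\varpi(\pi)=\{\theta(i,j):i\ne j\in\Omega_I(\pi),\pi(i)=\pi(j)\}$, $\theta(i,j)$ the unordered pair $\{i,j\}$ tagged by the type of $\pi(i)$; $g\circ\theta(i,j)=\theta(g(i),g(j))$; $\mathcal{G}_{\varpi(\pi)}(S)=\{g\in\mathcal{G}(S):g\circ\varpi(\pi)=\varpi(\pi)\}$; $\phi$ is the homomorphism restricting $g\in\mathcal{G}_{\varpi(\pi)}(S)$ to $\Omega_E(\pi)$. Graphs: the vertex set is $\Omega$ together with one auxiliary vertex $0$ (fixed by all of $\mathcal{G}(S)$; omitted when there are no external indices). The edges are $\{0,j\}$ for $j\in\Omega_E(\pi)$ and $\{i,j\}$ for each $\theta(i,j)\in\varpi(\pi)$. Each edge carries a label $\mathrm{type}[\mathrm{index}]$: in the externally labeled, internally unlabeled graph $G^E(\pi)$, an edge $\{0,j\}$ is labeled by the type and the specific external symbol $\pi(j)$, while internal edges are labeled by their type and a generic (unspecific) index; in the unlabeled graph (skeleton) $G(\pi)$, every edge is labeled by its type and a generic index. $g\in\mathcal{G}(S)$ acts on a labeled edge set by mapping each labeled edge $\{u,v\}$ to $\{g(u),g(v)\}$ with the same label. Two such graphs with labeled edge sets $\mathcal{E}_1,\mathcal{E}_2$ are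 isomorphic under $\mathcal{G}(S)$ if $g\circ\mathcal{E}_1=\mathcal{E}_2$ for some $g\in\mathcal{G}(S)$; $\operatorname{Aut}_{\mathcal{G}(S)}(G)=\{g\in\mathcal{G}(S): g\circ\mathcal{E}=\mathcal{E}\}$. *)

From mathcomp Require Import all_boot all_fingroup.
Set Implicit Arguments. Unset Strict Implicit. Unset Printing Implicit Defensive.

(* Index values live in a common carrier T; the values of
   type-t indices are those x with [range t x]. *)
Record tensor (T V Ty : Type) := Tensor {
  tord : nat;
  tslot : 'I_tord -> Ty;
  tval : tord.-tuple T -> V }.
Arguments tslot {T V Ty} t _.
Arguments tval {T V Ty} t _.

Section Tensors.
Variables (T V Ty : Type) (range : Ty -> T -> Prop).

Definition tsym (X : tensor T V Ty) (g : {perm 'I_(tord X)}) : Prop :=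
  (forall q, tslot X (g q) = tslot X q) /\
  (forall p : (tord X).-tuple T, (forall q, range (tslot X q) (tnth p q)) ->
     tval X [tuple tnth p (g q) | q < tord X] = tval X p).
End Tensors.

Unset Implicit Arguments.
Section FactorSet.
Variables (T V : Type) (Ty : finType) (range : Ty -> T -> Prop).
Variables (k : nat) (X : 'I_k -> tensor T V Ty).

Definition fdim (i : 'I_k) : nat := tord (X i).
Definition nslots : nat := \sum_(i < k) fdim i.
Definition off (i : 'I_k) : nat := \sum_(j < k | j < i) fdim j.

(* G(S): direct product of the G(X_i) on their blocks, together with
   permutations of identical factors inside each run of identical factors
   ((G(X)^n) ⋊ S_n for each run). *)
Definition inGS (g : {perm 'I_nslots}) : Prop :=
  exists (sigma : {perm 'I_k}) (h : forall i : 'I_k, {perm 'I_(fdim i)}),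
    (forall i, X (sigma i) = X i) /\
    (forall (i l : 'I_k), minn i (sigma i) <= l <= maxn i (sigma i) -> X l = X i) /\
    (forall i : 'I_k, tsym range (h i)) /\
    (forall (s : 'I_nslots) (i : 'I_k) (p : 'I_(fdim i)),
        (s : nat) = off i + p -> (g s : nat) = off (sigma i) + h i p).

Variables (Sym : finType) (ty : Sym -> Ty) (isExt : pred Sym).

Definition coloring (pi : 'I_nslots -> Sym) : Prop :=
  (forall (s : 'I_nslots) (i : 'I_k) (p : 'I_(fdim i)),
      (s : nat) = off i + p -> ty (pi s) = tslot (X i) p) /\
  (forall a, isExt a -> #|[set s | pi s == a]| = 1) /\
  (forall a, ~~ isExt a -> #|[set s | pi s == a]| \in [:: 0; 2]).

Definition inrho (h : {perm Sym}) : Prop :=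
  (forall a, isExt a -> h a = a) /\ (forall a, ty (h a) = ty a).

Definition GSrho_equiv (pi1 pi2 : 'I_nslots -> Sym) : Prop :=
  exists g h, inGS g /\ inrho h /\ forall s, pi1 (g s) = h (pi2 s).

Definition OmegaE (pi : 'I_nslots -> Sym) : {set 'I_nslots} :=
  [set s | isExt (pi s)].
Definition OmegaI (pi : 'I_nslots -> Sym) : {set 'I_nslots} :=
  [set s | ~~ isExt (pi s)].

Definition varpi (pi : 'I_nslots -> Sym) : {set {set 'I_nslots} * Ty} :=
  [set ([set i; j], ty (pi i)) | i in OmegaI pi, j in OmegaI pi
                                & (i != j) && (pi i == pi j)].

Definition act_pattern (g : {perm 'I_nslots}) (P : {set {set 'I_nslots} * Ty}) :=
  [set (g @: e.1, e.2) | e : ({set 'I_nslots} * Ty)%type in P].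

Definition G_varpi (pi : 'I_nslots -> Sym) (g : {perm 'I_nslots}) : Prop :=
  inGS g /\ act_pattern g (varpi pi) = varpi pi.

Definition Ker_phi (pi : 'I_nslots -> Sym) (g : {perm 'I_nslots}) : Prop :=
  G_varpi pi g /\ forall s, s \in OmegaE pi -> g s = s.

(* Graphs: vertices are option 'I_nslots, None being the auxiliary vertex 0.
   Labeled edges: (unordered pair, (type, index)), index None = generic. *)
Definition vtx := option 'I_nslots.
Definition ledge := ({set vtx} * (Ty * option Sym))%type.

Definition GE (pi : 'I_nslots -> Sym) : {set ledge} :=
  [set ([set None; Some j], (ty (pi j), Some (pi j))) | j in OmegaE pi] :|:
  [set ([set Some i; Some j], (ty (pi i), None)) | i in OmegaI pi, j in OmegaI pi
                                & (i != j) && (pi i == pi j)].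

Definition Gskel (pi : 'I_nslots -> Sym) : {set ledge} :=
  [set ([set None; Some j], (ty (pi j), None)) | j in OmegaE pi] :|:
  [set ([set Some i; Some j], (ty (pi i), None)) | i in OmegaI pi, j in OmegaI pi
                                & (i != j) && (pi i == pi j)].

Definition act_graph (g : {perm 'I_nslots}) (E : {set ledge}) : {set ledge} :=
  [set ((fun v : vtx => omap g v) @: e.1, e.2) | e : ledge in E].

Definition isomorphic_GS (E1 E2 : {set ledge}) : Prop :=
  exists g, inGS g /\ act_graph g E1 = E2.

Definition Aut_GS (E : {set ledge}) (g : {perm 'I_nslots}) : Prop :=
  inGS g /\ act_graph g E = E.

End FactorSet.

(* A permutation g of the slots fixes the auxiliary vertex, so it maps the edges
   through that vertex (one per external slot, labeled by its type and symbol) to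
   edges through it, and the remaining edges (the contraction pattern, lifted to
   the graph) among themselves.  Hence g : G^E(pi1) ~ G^E(pi2) says exactly that g
   carries every external slot to the slot with the same symbol and maps varpi(pi1)
   onto varpi(pi2).  The latter means that s, t carry equal symbols under pi1 iff
   g s, g t do under pi2, with matching types; so a type-preserving relabeling h
   with pi1 = h o pi2 o g exists, obtained by extending a partial bijection of
   symbols fiberwise over the types, and h fixes the external symbols because each
   of them occurs exactly once.  The converse direction is a direct computation,
   and G(S) is closed under inverses since its block permutations can be inverted
   blockwise.  The automorphism statements are the case pi1 = pi2: for the
   skeleton, invariance of varpi already forces g to preserve the set of internal
   slots (every internal slot lies in a contracted pair), while the symbol labels
   of G^E(pi) force g to fix each external slot. *)

From Pilot Require Import Defs.
From mathcomp Require Import all_boot all_fingroup.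
Set Implicit Arguments. Unset Strict Implicit. Unset Printing Implicit Defensive.

Section TypedPermutations.
Variables (S Ty : finType) (ty : S -> Ty).

Definition transfer (C D : {set S}) (x : S) : S := nth x (enum D) (index x (enum C)).

Section Transfer.
Variables (C D : {set S}).
Hypothesis eq_card : #|C| = #|D|.

Lemma index_lt_card x : x \in C -> index x (enum C) < size (enum D).
Proof. by move=> Cx; rewrite -cardE -eq_card cardE index_mem mem_enum. Qed.

Lemma transfer_mem x : x \in C -> transfer C D x \in D.
Proof. by move=> Cx; rewrite -mem_enum mem_nth ?index_lt_card. Qed.

Lemma transfer_inj : {in C &, injective (transfer C D)}.
Proof.
move=> x y Cx Cy; rewrite /transfer (set_nth_default y x (index_lt_card Cx)) => /eqP.
rewrite nth_uniq ?index_lt_card ?enum_uniq // => /eqP.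
by apply: index_inj; rewrite ?mem_enum.
Qed.
End Transfer.

Definition fiber (t : Ty) : {set S} := [set a | ty a == t].

Lemma perm_extend (A : {set S}) (phi : S -> S) :
  {in A &, injective phi} -> {in A, forall a, ty (phi a) = ty a} ->
  exists h : {perm S}, {in A, h =1 phi} /\ forall a, ty (h a) = ty a.
Proof.
move=> phi_inj ty_phi.
pose C t := fiber t :\: A; pose D t := fiber t :\: phi @: A.
have card_CD t : #|C t| = #|D t|.
  rewrite !cardsD; congr (_ - _).
  have -> : fiber t :&: phi @: A = phi @: (fiber t :&: A).
    apply/setP => b; apply/setIP/imsetP => [[]|[a /setIP[ta Aa] ->]].
      rewrite inE => tb /imsetP[a Aa eq_b]; exists a => //.
      by rewrite !inE Aa andbT -(ty_phi _ Aa) -eq_b.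
    by split; [move: ta; rewrite !inE ty_phi | exact: imset_f].
  by apply/esym/card_in_imset => a b /setIP[_ Aa] /setIP[_ Ab]; apply: phi_inj.
pose psi a := transfer (C (ty a)) (D (ty a)) a.
have psi_mem a : a \notin A -> psi a \in D (ty a).
  by move=> Aa; apply: (transfer_mem (card_CD _)); rewrite !inE Aa /=.
pose h0 a := if a \in A then phi a else psi a.
have ty_h0 a : ty (h0 a) = ty a.
  rewrite /h0; case: ifPn => [/ty_phi //|/psi_mem].
  by rewrite !inE => /andP[_ /eqP].
have h0_inj : injective h0.
  move=> a b eq_ab; have := ty_h0 a; rewrite eq_ab ty_h0 => ty_ab.
  move: eq_ab; rewrite /h0; case: ifPn => Aa; case: ifPn => Ab.
  - exact: phi_inj.
  - by move=> eq_ab; have := psi_mem b Ab; rewrite -eq_ab !inE imset_f ?andbF.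
  - by move=> eq_ab; have := psi_mem a Aa; rewrite eq_ab !inE imset_f ?andbF.
  - rewrite /psi ty_ab; apply: (transfer_inj (card_CD _)); by rewrite /C !inE ?Aa ?Ab ?ty_ab /=.
exists (perm h0_inj); split=> [a Aa|a]; rewrite permE //.
by rewrite /h0 Aa.
Qed.

Lemma typed_relabeling (I : finType) (F G : I -> S) :
  (forall u v, (F u == F v) = (G u == G v)) -> (forall u, ty (F u) = ty (G u)) ->
  exists h : {perm S}, (forall u, h (F u) = G u) /\ forall a, ty (h a) = ty a.
Proof.
move=> eq_kernel ty_FG.
pose phi a := if [pick u | F u == a] is Some u then G u else a.
have phiF u : phi (F u) = G u.
  rewrite /phi; case: pickP => [v /eqP|/(_ u)]; last by rewrite eqxx.
  by move=> /eqP; rewrite eq_kernel => /eqP.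
have [|a /imsetP[u _ ->]|h [hF ty_h]] := @perm_extend [set F u | u in I] phi.
- by move=> _ _ /imsetP[u _ ->] /imsetP[v _ ->]; rewrite !phiF => /eqP; rewrite -eq_kernel => /eqP.
- by rewrite phiF ty_FG.
by exists h; split=> // u; rewrite hF ?imset_f ?phiF.
Qed.

End TypedPermutations.

Section TensorSymmetries.
Variables (T V Ty : Type) (range : Ty -> T -> Prop).

Lemma tsym_inv (A : tensor T V Ty) (h : {perm 'I_(tord A)}) :
  tsym range h -> tsym range h^-1%g.
Proof.
case=> slot_h val_h.
have slot_hV q : tslot A (h^-1%g q) = tslot A q by rewrite -{2}(permKV h q) slot_h.
split=> // p range_p; set p' := [tuple tnth p (h^-1%g q) | q < tord A].
have range_p' q : range (tslot A q) (tnth p' q) by rewrite tnth_mktuple -slot_hV.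
rewrite -(val_h p' range_p'); congr (Defs.tval A _); apply: eq_from_tnth => q.
by rewrite !tnth_mktuple permK.
Qed.

Lemma tsym_cast (A B : tensor T V Ty) (eAB : A = B) (h : {perm 'I_(tord A)}) :
  tsym range h -> tsym range (cast_perm (congr1 (@tord T V Ty) eAB) h).
Proof. by case: B / eAB; rewrite cast_perm_id. Qed.

Lemma tslot_cast (A B : tensor T V Ty) (eAB : A = B) (q : 'I_(tord A)) :
  tslot B (cast_ord (congr1 (@tord T V Ty) eAB) q) = tslot A q.
Proof. by case: B / eAB; rewrite cast_ord_id. Qed.

End TensorSymmetries.

Lemma sum_block (k : nat) (f : 'I_k -> nat) (s : nat) : s < \sum_(j < k) f j ->
  exists i : 'I_k, \sum_(j < k | j < i) f j <= s < \sum_(j < k | j < i) f j + f i.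
Proof.
elim: k f => [|k IH] f; first by rewrite big_ord0.
rewrite big_ord_recr /=; have [lt_s _|le_s lt_s] := ltnP s (\sum_(j < k) f (widen_ord (leqnSn k) j)).
  have [i lt_i] := IH _ lt_s; exists (widen_ord (leqnSn k) i).
  rewrite big_mkcond big_ord_recr /= ltnNge (ltnW (ltn_ord i)) addn0 -big_mkcond //.
exists ord_max; rewrite big_mkcond big_ord_recr /= ltnn addn0.
by under eq_bigr => j _ do rewrite ltn_ord; rewrite le_s lt_s.
Qed.

Section SlotBlocks.
Variables (T V : Type) (Ty : finType) (range : Ty -> T -> Prop).
Variables (k : nat) (X : 'I_k -> tensor T V Ty).
Local Notation fdim := (fdim T V Ty k X).
Local Notation off := (off T V Ty k X).
Local Notation nslots := (nslots T V Ty k X).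
Local Notation inGS := (inGS T V Ty range k X).

Lemma off_bound (i : 'I_k) (p : 'I_(fdim i)) : off i + p < nslots.
Proof.
apply: (@leq_trans (off i + fdim i)); first by rewrite ltn_add2l.
rewrite /nslots (bigID (fun j : 'I_k => j < i)) /= leq_add2l.
by rewrite (bigD1 i) ?ltnn //= leq_addr.
Qed.

Lemma slot_block (s : 'I_nslots) : exists i (p : 'I_(fdim i)), (s : nat) = off i + p.
Proof.
have [i /andP[le_off lt_s]] := sum_block (ltn_ord s).
have lt_p : s - off i < fdim i by rewrite ltn_subLR.
by exists i, (Ordinal lt_p); rewrite /= subnKC.
Qed.

Lemma inGS_inv (g : {perm 'I_nslots}) : inGS g -> inGS g^-1%g.
Proof.
case=> sigma [h [X_sigma [X_run [sym_h g_block]]]].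
have X_sigmaV i : X (sigma^-1%g i) = X i by rewrite -{2}(permKV sigma i) X_sigma.
pose E i := congr1 (@tord T V Ty) (X_sigmaV i).
exists sigma^-1%g, (fun i => cast_perm (E i) (h (sigma^-1%g i))^-1%g).
split=> [//|]; split=> [i l|]; [|split=> [i|s i p s_ip]].
- by move=> bound; rewrite -(X_sigmaV i); apply: X_run; rewrite permKV minnC maxnC.
- exact/tsym_cast/tsym_inv.
set j := sigma^-1%g i; set q := (h j)^-1%g (cast_ord (esym (E i)) p).
have g_t : g (Ordinal (off_bound q)) = s.
  by apply: val_inj; rewrite /= s_ip (g_block (Ordinal (off_bound q)) j q erefl) /q !permKV.
by rewrite -g_t permK cast_permE.
Qed.

End SlotBlocks.

Lemma imset_permC (S : finType) (g : {perm S}) (A : {set S}) : g @: (~: A) = ~: (g @: A).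
Proof.
apply/setP => x; rewrite -(permKV g x) inE !mem_imset ?inE //; exact: perm_inj.
Qed.

Lemma imset_pair (S S' : finType) (f : S -> S') (a b : S) : f @: [set a; b] = [set f a; f b].
Proof. by rewrite imsetU1 imset_set1. Qed.

Lemma in_set2P (S : finType) (x a b : S) : reflect (x = a \/ x = b) (x \in [set a; b]).
Proof. by rewrite !inE; apply: (iffP orP) => -[] /eqP; auto. Qed.

Section Colorings.
Variables (T V : Type) (Ty : finType) (range : Ty -> T -> Prop).
Variables (k : nat) (X : 'I_k -> tensor T V Ty).
Variables (Sym : finType) (ty : Sym -> Ty) (isExt : pred Sym).
Local Notation slot := ('I_(nslots T V Ty k X)).
Local Notation vtx := (vtx T V Ty k X).
Local Notation ledge := (ledge T V Ty k X Sym).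
Local Notation pattern := {set {set slot} * Ty}.
Local Notation inGS := (inGS T V Ty range k X).
Local Notation coloring := (coloring T V Ty k X Sym ty isExt).
Local Notation inrho := (inrho Ty Sym ty isExt).
Local Notation OmegaE := (OmegaE T V Ty k X Sym isExt).
Local Notation OmegaI := (OmegaI T V Ty k X Sym isExt).
Local Notation varpi := (varpi T V Ty k X Sym ty isExt).
Local Notation act_pattern := (act_pattern T V Ty k X).
Local Notation act_graph := (act_graph T V Ty k X Sym).
Local Notation GE := (GE T V Ty k X Sym ty isExt).
Local Notation Gskel := (Gskel T V Ty k X Sym ty isExt).

Lemma inGS_ty (pi : slot -> Sym) (g : {perm slot}) :
  coloring pi -> inGS g -> forall s, ty (pi (g s)) = ty (pi s).
Proof.
case=> pi_ty _ [sigma [h [X_sigma [_ [sym_h g_block]]]]] s.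
have [i [p s_ip]] := slot_block s.
pose E := congr1 (@tord T V Ty) (X_sigma i).
rewrite (pi_ty s i p s_ip) (pi_ty _ _ (cast_ord (esym E) (h i p)) (g_block s i p s_ip)).
by rewrite -(tslot_cast (X_sigma i)) cast_ordKV; case: (sym_h i).
Qed.

Lemma varpi_P (pi : slot -> Sym) (E : {set slot}) c :
  reflect (exists i j, [/\ i != j, ~~ isExt (pi i), pi i = pi j, E = [set i; j] & c = ty (pi i)])
          ((E, c) \in varpi pi).
Proof.
apply: (iffP imset2P) => [[i j] | [i [j [ij int_i eq_ij -> ->]]]].
  by rewrite !inE => int_i /and3P[_ ij /eqP eq_ij] [-> ->]; exists i, j.
by apply: (Imset2spec (x1 := i) (x2 := j)); rewrite ?inE -?eq_ij ?ij ?int_i ?eqxx.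
Qed.

Lemma mem_varpi_pair (pi : slot -> Sym) s t c : s != t ->
  (([set s; t], c) \in varpi pi) = [&& ~~ isExt (pi s), pi s == pi t & c == ty (pi s)].
Proof.
move=> st; apply/varpi_P/and3P => [[i [j [_ int_i eq_ij eq_st ->]]]|[int_s /eqP eq_st /eqP ->]].
  have pi_ij x : x \in [set s; t] -> pi x = pi i by rewrite eq_st => /in_set2P[]->.
  by rewrite !pi_ij ?int_i ?eqxx // !inE eqxx ?orbT.
by exists s, t.
Qed.

Lemma mem_act_pattern (g : {perm slot}) (P : pattern) (E : {set slot}) c :
  ((g @: E, c) \in act_pattern g P) = ((E, c) \in P).
Proof.
have act_inj : injective (fun e : {set slot} * Ty => (g @: e.1, e.2)).
  by move=> [E1 c1] [E2 c2] [/(imset_inj (@perm_inj _ g)) -> ->].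
exact: (mem_imset _ (E, c) act_inj).
Qed.

Lemma act_pattern_support (g : {perm slot}) (P : pattern) :
  \bigcup_(e in act_pattern g P) e.1 = g @: \bigcup_(e in P) e.1.
Proof.
apply/setP => x; apply/bigcupP/imsetP.
  move=> [_ /imsetP[e Pe ->] /imsetP[y ye ->]].
  by exists y => //; apply/bigcupP; exists e.
by case=> y /bigcupP[e Pe ye] ->; exists (g @: e.1, e.2); apply: imset_f.
Qed.

Lemma OmegaEC (pi : slot -> Sym) : OmegaE pi = ~: OmegaI pi.
Proof. by apply/setP => s; rewrite !inE negbK. Qed.

Section ColoringFacts.
Variables (pi : slot -> Sym).
Hypothesis col_pi : coloring pi.

Lemma coloring_ext_unique s t : isExt (pi s) -> pi t = pi s -> t = s.
Proof.
case: col_pi => _ [card_ext _] ext_s eq_ts; have /eqP/cards1P[x def_x] := card_ext _ ext_s.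
have : t \in [set u | pi u == pi s] by rewrite inE eq_ts.
have : s \in [set u | pi u == pi s] by rewrite inE.
by rewrite def_x !inE => /eqP-> /eqP->.
Qed.

Lemma coloring_ext_exists a : isExt a -> exists s, pi s = a.
Proof.
case: col_pi => _ [card_ext _] ext_a; have /eqP/cards1P[x def_x] := card_ext _ ext_a.
have : x \in [set u | pi u == a] by rewrite def_x inE.
by rewrite inE => /eqP; exists x.
Qed.

Lemma coloring_partner s : ~~ isExt (pi s) -> exists2 t, t != s & pi t = pi s.
Proof.
case: col_pi => _ [_ card_int] int_s; have := card_int _ int_s.
have pi_s : s \in [set u | pi u == pi s] by rewrite inE.
rewrite (cardsD1 s) pi_s !inE /= eqSS => /cards1P[t def_t].
have : t \in [set u | pi u == pi s] :\ s by rewrite def_t inE.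
by rewrite !inE => /andP[ts /eqP]; exists t.
Qed.

Lemma coloring_eq_varpi s t : s != t -> (pi s == pi t) = (([set s; t], ty (pi s)) \in varpi pi).
Proof.
move=> st; rewrite mem_varpi_pair // eqxx andbT; apply/idP/andP => [/eqP eq_st|[] //].
split; last by rewrite eq_st.
by apply: contra st => /coloring_ext_unique/(_ (esym eq_st))->.
Qed.

Lemma OmegaI_varpi : OmegaI pi = \bigcup_(e in varpi pi) e.1.
Proof.
apply/setP => s; rewrite inE; apply/idP/bigcupP => [int_s|].
  have [t ts eq_ts] := coloring_partner int_s; exists ([set s; t], ty (pi s)); last by rewrite !inE eqxx.
  by rewrite mem_varpi_pair 1?eq_sym // int_s eq_ts !eqxx.
case=> -[E c] /varpi_P[i [j [_ int_i eq_ij -> _]]] /=.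
by case/in_set2P => ->; rewrite -?eq_ij.
Qed.

Lemma varpi_stable_OmegaE (g : {perm slot}) :
  act_pattern g (varpi pi) = varpi pi -> g @: OmegaE pi = OmegaE pi.
Proof. by move=> stable; rewrite OmegaEC imset_permC OmegaI_varpi -act_pattern_support stable. Qed.

End ColoringFacts.

Definition star (A : {set slot}) (lab : slot -> Ty * option Sym) : {set ledge} :=
  [set ([set None; Some j], lab j) | j in A].

Definition lift_pattern (P : pattern) : {set ledge} :=
  [set (Some @: e.1, (e.2, None)) | e : {set slot} * Ty in P].

Lemma lift_varpi (pi : slot -> Sym) :
  lift_pattern (varpi pi) =
  [set ([set Some i; Some j], (ty (pi i), None)) | i in OmegaI pi, j in OmegaI pi
                                                 & (i != j) && (pi i == pi j)].
Proof.
apply/setP => e; apply/imsetP/imset2P => [[_ /imset2P[i j Ii Ij ->] ->]|[i j Ii Ij ->]].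
  by exists i j; rewrite ?imset_pair.
by exists ([set i; j], ty (pi i)); rewrite ?imset2_f ?imset_pair.
Qed.

Lemma GE_split (pi : slot -> Sym) :
  GE pi = star (OmegaE pi) (fun j => (ty (pi j), Some (pi j))) :|: lift_pattern (varpi pi).
Proof. by rewrite lift_varpi. Qed.

Lemma Gskel_split (pi : slot -> Sym) :
  Gskel pi = star (OmegaE pi) (fun j => (ty (pi j), None)) :|: lift_pattern (varpi pi).
Proof. by rewrite lift_varpi. Qed.

Lemma mem_star (A : {set slot}) lab j l :
  (([set None; Some j], l) \in star A lab) = (j \in A) && (l == lab j).
Proof.
apply/imsetP/andP => [[i Ai [eq_ji ->]]|[Aj /eqP->]]; last by exists j.
suff -> : j = i by rewrite eqxx.
have : Some j \in ([set None; Some i] : {set vtx}) by rewrite -eq_ji !inE eqxx orbT.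
by rewrite !inE => /eqP[].
Qed.

Lemma star_eq A B lab lab' :
  star A lab = star B lab' <-> A = B /\ {in A, lab =1 lab'}.
Proof.
split=> [eq_AB|[<- eq_lab]]; last by apply: eq_in_imset => j Aj; rewrite eq_lab.
have mem_lab j : j \in A -> (j \in B) && (lab j == lab' j).
  by move=> Aj; rewrite -mem_star -eq_AB mem_star Aj eqxx.
split=> [|j /mem_lab/andP[_ /eqP] //].
apply/setP => j; apply/idP/idP => [/mem_lab/andP[] //|Bj].
have : ([set None; Some j], lab' j) \in star A lab by rewrite eq_AB mem_star Bj eqxx.
by rewrite mem_star => /andP[].
Qed.

Lemma act_star (g : {perm slot}) A lab :
  act_graph g (star A lab) = star (g @: A) (fun j => lab (g^-1%g j)).
Proof.
rewrite /act_graph /star -!imset_comp; apply: eq_imset => j.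
by rewrite /= imset_pair permK.
Qed.

Lemma act_star_eq (g : {perm slot}) A B lab lab' :
  act_graph g (star A lab) = star B lab' <-> g @: A = B /\ {in A, forall j, lab' (g j) = lab j}.
Proof.
rewrite act_star; split=> [/star_eq[<- eq_lab]|[<- eq_lab]].
  by split=> // j Aj; rewrite -eq_lab ?permK ?imset_f.
by apply/star_eq; split=> // _ /imsetP[j Aj ->]; rewrite permK eq_lab.
Qed.

Lemma act_lift_pattern (g : {perm slot}) (P : pattern) :
  act_graph g (lift_pattern P) = lift_pattern (act_pattern g P).
Proof.
rewrite /act_graph /lift_pattern /act_pattern -!imset_comp; apply: eq_imset => e /=.
by rewrite -!imset_comp; congr (_, _); apply: eq_imset.
Qed.

Lemma lift_pattern_inj : injective lift_pattern.
Proof.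
apply: imset_inj => -[E1 c1] [E2 c2] [/(imset_inj (@Some_inj _)) -> ->] //.
Qed.

Lemma star_lift_eq A B lab lab' (P Q : pattern) :
  star A lab :|: lift_pattern P = star B lab' :|: lift_pattern Q <->
  star A lab = star B lab' /\ P = Q.
Proof.
split=> [eq_AP|[-> ->] //].
pose N := [set e : ledge | None \in e.1].
have star_N A1 l1 : star A1 l1 \subset N by apply/subsetP => _ /imsetP[j _ ->]; rewrite !inE eqxx.
have lift_N P1 : [disjoint lift_pattern P1 & N].
  rewrite -setI_eq0; apply/eqP/setP => e; rewrite !inE.
  by apply/andP => -[/imsetP[[E c] _ ->] /imsetP[]].
have starI A1 l1 P1 : (star A1 l1 :|: lift_pattern P1) :&: N = star A1 l1.
  by rewrite setIUl (setIidPl (star_N _ _)) (disjoint_setI0 (lift_N _)) setU0.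
have liftD A1 l1 P1 : (star A1 l1 :|: lift_pattern P1) :\: N = lift_pattern P1.
  have /eqP star_D : star A1 l1 :\: N == set0 by rewrite setD_eq0 star_N.
  by rewrite setDUl (setDidPl (lift_N _)) star_D set0U.
split; first by rewrite -(starI A lab P) eq_AP starI.
by apply: lift_pattern_inj; rewrite -(liftD A lab P) eq_AP liftD.
Qed.

Lemma act_star_lift_eq (g : {perm slot}) A B lab lab' (P Q : pattern) :
  act_graph g (star A lab :|: lift_pattern P) = star B lab' :|: lift_pattern Q <->
  act_graph g (star A lab) = star B lab' /\ act_pattern g P = Q.
Proof.
have -> : act_graph g (star A lab :|: lift_pattern P) =
          act_graph g (star A lab) :|: lift_pattern (act_pattern g P).
  by rewrite -act_lift_pattern; apply: imsetU.
by rewrite act_star; split=> [/star_lift_eq|eqs]; last apply/star_lift_eq.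
Qed.

Lemma act_GE_eq (g : {perm slot}) (pi1 pi2 : slot -> Sym) :
  act_graph g (GE pi1) = GE pi2 <->
  [/\ g @: OmegaE pi1 = OmegaE pi2, {in OmegaE pi1, forall j, pi2 (g j) = pi1 j}
    & act_pattern g (varpi pi1) = varpi pi2].
Proof.
rewrite !GE_split; split=> [/act_star_lift_eq[/act_star_eq[eq_E eq_lab] eq_P]|[eq_E eq_lab eq_P]].
  by split=> // j /eq_lab[].
by apply/act_star_lift_eq; split=> //; apply/act_star_eq; split=> // j /eq_lab->.
Qed.

Lemma act_Gskel_eq (g : {perm slot}) (pi : slot -> Sym) :
  act_graph g (Gskel pi) = Gskel pi <->
  [/\ g @: OmegaE pi = OmegaE pi, {in OmegaE pi, forall j, ty (pi (g j)) = ty (pi j)}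
    & act_pattern g (varpi pi) = varpi pi].
Proof.
rewrite !Gskel_split; split=> [/act_star_lift_eq[/act_star_eq[eq_E eq_lab] eq_P]|[eq_E eq_lab eq_P]].
  by split=> // j /eq_lab[].
by apply/act_star_lift_eq; split=> //; apply/act_star_eq; split=> // j /eq_lab->.
Qed.

Lemma inrho_ext (h : {perm Sym}) a : inrho h -> isExt (h a) = isExt a.
Proof.
case=> h_ext _; apply/idP/idP => [ext_ha|/h_ext-> //].
by rewrite -(perm_inj (h_ext _ ext_ha)).
Qed.

Section Relabeling.
Variables (g : {perm slot}) (h : {perm Sym}) (pi1 pi2 : slot -> Sym).
Hypotheses (rho_h : inrho h) (pi1_rel : forall s, pi1 s = h (pi2 (g s))).

Lemma act_varpi_of_relabel : act_pattern g (varpi pi1) = varpi pi2.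
Proof.
apply/setP => -[E c].
have -> : E = g @: (g^-1%g @: E) by rewrite -imset_comp (eq_imset _ (permKV g)) imset_id.
rewrite mem_act_pattern; move: (g^-1%g @: E) => {}E.
apply/varpi_P/varpi_P => [[i [j [ij int_i eq_ij -> ->]]]|[i [j [ij int_i eq_ij eq_E ->]]]].
  exists (g i), (g j); rewrite (inj_eq perm_inj) imset_pair; split=> //.
  - by rewrite -(inrho_ext _ rho_h) -pi1_rel.
  - by apply: (@perm_inj _ h); rewrite -!pi1_rel.
  - by rewrite pi1_rel; case: rho_h.
have -> : E = [set g^-1%g i; g^-1%g j].
  by apply: (imset_inj (@perm_inj _ g)); rewrite eq_E imset_pair !permKV.
exists (g^-1%g i), (g^-1%g j); rewrite (inj_eq perm_inj) !pi1_rel !permKV eq_ij.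
by split=> //; [rewrite inrho_ext -?eq_ij | case: rho_h].
Qed.

Lemma act_GE_of_relabel : act_graph g (GE pi1) = GE pi2.
Proof.
apply/act_GE_eq; split; last exact: act_varpi_of_relabel.
  apply/setP => u; rewrite -(permKV g u) mem_imset ?inE ?pi1_rel ?inrho_ext ?permKV //.
  exact: perm_inj.
by move=> j; rewrite inE pi1_rel inrho_ext //; case: rho_h => h_ext _ /h_ext->.
Qed.

End Relabeling.

Lemma relabel_of_act_GE (g : {perm slot}) (pi1 pi2 : slot -> Sym) :
  coloring pi1 -> coloring pi2 -> act_graph g (GE pi1) = GE pi2 ->
  exists2 h, inrho h & forall s, pi1 s = h (pi2 (g s)).
Proof.
move=> col1 col2 /act_GE_eq[eq_E eq_ext eq_P].
have varpi_g s t c : (([set g s; g t], c) \in varpi pi2) = (([set s; t], c) \in varpi pi1).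
  by rewrite -eq_P -imset_pair mem_act_pattern.
have ty_g s : ty (pi2 (g s)) = ty (pi1 s).
  have [ext_s|int_s] := boolP (isExt (pi1 s)); first by rewrite eq_ext ?inE.
  have [t ts eq_ts] := coloring_partner col1 int_s.
  have : ([set s; t], ty (pi1 s)) \in varpi pi1 by rewrite -coloring_eq_varpi 1?eq_sym ?eq_ts.
  by rewrite -varpi_g mem_varpi_pair ?(inj_eq perm_inj) 1?eq_sym // => /and3P[_ _ /eqP].
have kernel s t : (pi2 (g s) == pi2 (g t)) = (pi1 s == pi1 t).
  have [-> | st] := eqVneq s t; first by rewrite !eqxx.
  by rewrite coloring_eq_varpi ?(inj_eq perm_inj) // ty_g varpi_g -coloring_eq_varpi.
have [h [h_rel h_ty]] := typed_relabeling kernel ty_g.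
exists h => [|s]; last by rewrite h_rel.
split=> // a ext_a; have [u def_a] := coloring_ext_exists col2 ext_a.
have : u \in g @: OmegaE pi1 by rewrite eq_E inE def_a.
by case/imsetP => j ext_j def_u; rewrite -def_a def_u h_rel eq_ext.
Qed.

End Colorings.

Theorem theorem4 (T V : Type) (Ty : finType) (range : Ty -> T -> Prop)
  (k : nat) (X : 'I_k -> tensor T V Ty)
  (Sym : finType) (ty : Sym -> Ty) (isExt : pred Sym)
  (pi pi1 pi2 : 'I_(nslots T V Ty k X) -> Sym) :
  coloring T V Ty k X Sym ty isExt pi ->
  coloring T V Ty k X Sym ty isExt pi1 ->
  coloring T V Ty k X Sym ty isExt pi2 ->
  (GSrho_equiv T V Ty range k X Sym ty isExt pi1 pi2 <->
     isomorphic_GS T V Ty range k X Sym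
       (GE T V Ty k X Sym ty isExt pi1) (GE T V Ty k X Sym ty isExt pi2)) /\
  (forall g, Aut_GS T V Ty range k X Sym (Gskel T V Ty k X Sym ty isExt pi) g <->
             G_varpi T V Ty range k X Sym ty isExt pi g) /\
  (forall g, Aut_GS T V Ty range k X Sym (GE T V Ty k X Sym ty isExt pi) g <->
             Ker_phi T V Ty range k X Sym ty isExt pi g).
Proof.
move=> col col1 col2; split; [|split=> g; split].
- split=> [[g [h [GS_g [rho_h rel]]]]|[g [GS_g iso]]].
    exists g^-1%g; split; first exact: inGS_inv.
    by apply: (act_GE_of_relabel rho_h) => s; rewrite -rel permKV.
  have [h rho_h rel] := relabel_of_act_GE col1 col2 iso.
  by exists g^-1%g, h; split; [exact: inGS_inv | split=> // s; rewrite rel permKV].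
- by case=> GS_g /act_Gskel_eq[].
- case=> GS_g stable; split=> //; apply/act_Gskel_eq; split=> //.
    exact: (varpi_stable_OmegaE col).
  by move=> j _; exact: (inGS_ty col GS_g).
- case=> GS_g /act_GE_eq[_ fix_ext stable]; split=> // s ext_s.
  by have := fix_ext s ext_s; rewrite inE in ext_s; exact: (coloring_ext_unique col ext_s).
- case=> -[GS_g stable] fix_ext; split=> //; apply/act_GE_eq; split=> // [|j /fix_ext-> //].
  by rewrite (eq_in_imset fix_ext) imset_id.
Qed.
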